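(* Let $L$ and $L'$ be isomorphic intersection lattices such that $L'$ is full and $\hat 1_{L'}\in\bullet(\mathrm{nci}(L'))$. Then $\hat 1_L\in\bullet(\mathrm{nci}(L))$.
   Context: A finite family $\mathcal{F}$ of sets is non-trivial if it is non-empty and no $X\in\mathcal{F}$ satisfies $X=\bigcup\mathcal{F}$. For such $\mathcal{F}$ and non-empty $\mathcal{T}\subseteq\mathcal{F}$, let $S_{\mathcal{T}}=\bigcap\mathcal{T}$, and let $S_\emptyset=\bigcup\mathcal{F}$. The intersection lattice of $\mathcal{F}$ is $\mathbb{L}_{\mathcal{F}}=(\{S_{\mathcal{T}}\mid\mathcal{T}\subseteq\mathcal{F}\},\subseteq)$, with greatest element $\hat 1=\bigcup\mathcal{F}$; an intersection lattice is one of this form. For $L=\mathbb{L}_{\mathcal{F}}$ and $x\in\hat 1$, let $\min_L(x)=S_{\{X\in\mathcal{F}\mid x\in X\}}$. $L$ is full if for every $U\in L$ with $U\neq\hat 1$ there exists $x\in\hat 1$ with $\min_L(x)=U$. The Möbius function of a finite poset $P$ is defined for $x\le y$ by $\mu_P(y,y)=1$ and $\mu_P(x,y)=-\sum_{x<z\le y}\mu_P(z,y)$. The non-cancelling intersections are $\mathrm{nci}(L)=\{U\in L\mid U\neq\hat 1,\ \mu_L(U,\hat 1)\neq 0\}$. For sets $A,B$, $A\,\dot\cup\,B=A\cup B$ is defined only when $A\cap B=\emptyset$, and $A\,\dot\setminus\,B=A\setminus B$ is defined only when $B\subseteq A$. For a finite family $\mathcal{G}$ of sets, $\bullet(\mathcal{G})$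 is the smallest family of sets containing $\emptyset$ and every member of $\mathcal{G}$ and closed under all well-defined disjoint unions and subset complements. *)

From HB Require Import structures.
From mathcomp Require Import all_boot all_order all_algebra finmap.
From mathcomp Require Import boolp classical_sets functions cardinality fsbigop.

Set Implicit Arguments.
Unset Strict Implicit.
Unset Printing Implicit Defensive.

Import Order.TTheory GRing.Theory Num.Theory.
Local Open Scope classical_set_scope.
Local Open Scope ring_scope.

Section IntersectionLattices.
Variable T : Type.
Implicit Types (F G Tc L : set (set T)) (U V X : set T).

Definition nontrivial F : Prop :=
  finite_set F /\ F !=set0 /\ ~ (exists2 X, F X & X = \bigcup_(Y in F) Y).

Definition hat1 F : set T := \bigcup_(Y in F) Y.

Definition Sfam F Tc : set T :=
  if pselect (Tc = set0) then hat1 F else \bigcap_(X in Tc) X.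

(* the intersection lattice L_F (as the set of its elements, ordered by inclusion) *)
Definition ilat F : set (set T) := [set U | exists2 Tc, Tc `<=` F & U = Sfam F Tc].

Definition minL F (x : T) : set T := Sfam F [set X | F X /\ X x].

Definition full F : Prop :=
  forall U, ilat F U -> U <> hat1 F -> exists2 x, hat1 F x & minL F x = U.

(* Moebius function of a finite poset P of sets (ordered by inclusion), computed
   by its defining recursion mu(y,y) = 1, mu(x,y) = - sum_{x < z <= y} mu(z,y),
   with a fuel argument; fuel #|P|.+1 is more than the length of any chain. *)
Fixpoint mob_fuel (P : set (set T)) (n : nat) (x y : set T) : int :=
  if pselect (x = y) then 1 else
  match n with
  | 0 => 0
  | n'.+1 => - \sum_(z \in [set z | P z /\ x `<` z /\ z `<=` y]) mob_fuel P n' z y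
  end.

Definition moebius (P : set (set T)) (x y : set T) : int :=
  mob_fuel P (#|` fset_set P|).+1 x y.

Definition nci F : set (set T) :=
  [set U | ilat F U /\ U <> hat1 F /\ moebius (ilat F) U (hat1 F) <> 0].

Inductive bullet G : set T -> Prop :=
  | bullet0 : bullet G set0
  | bulletG X : G X -> bullet G X
  | bulletU A B : bullet G A -> bullet G B -> A `&` B = set0 -> bullet G (A `|` B)
  | bulletD A B : bullet G A -> bullet G B -> B `<=` A -> bullet G (A `\` B).

End IntersectionLattices.

Definition lat_iso (T T' : Type) (L : set (set T)) (L' : set (set T')) : Prop :=
  exists f : set T -> set T',
    [/\ forall U, L U -> L' (f U),
        forall V, L' V -> exists2 U, L U & f U = V,
        forall U V, L U -> L V -> f U = f V -> U = V &
        forall U V, L U -> L V -> (U `<=` V <-> f U `<=` f V)].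

From HB Require Import structures.
From mathcomp Require Import all_boot all_order all_algebra finmap.
From mathcomp Require Import boolp classical_sets functions cardinality fsbigop.

(* Let f : L -> L' be the isomorphism. Since L' is full, every point x of
   hat1 L can be matched with a point y of hat1 L' such that
   min_L'(y) = f(min_L(x)). Pulling a set Y back to the points matched with
   some point of Y sends every f(U) to U, in particular hat1 L' to hat1 L.
   The sets of •(nci L') are unions of fibres of min_L', and on such sets the
   pullback commutes with disjoint unions and subset complements. Finally f
   preserves the Moebius function, hence maps nci L onto nci L', so the
   pullback carries •(nci L') into •(nci L). *)

Set Implicit Arguments.
Unset Strict Implicit.
Unset Printing Implicit Defensive.
Local Open Scope classical_set_scope.

Section Pullback.
Variables (T T' C : Type) (D : set T) (D' : set T') (k : T -> C) (k' : T' -> C).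
Implicit Types Y : set T'.

Definition saturated Y : Prop :=
  Y `<=` D' /\ forall y y', Y y -> D' y' -> k' y' = k' y -> Y y'.

Definition pullback Y : set T := D `&` k @^-1` (k' @` Y).

Lemma saturated0 : saturated set0.
Proof. by split. Qed.

Lemma saturatedU A B : saturated A -> saturated B -> saturated (A `|` B).
Proof.
move=> [AD satA] [BD satB]; split=> [y [/AD|/BD] //|y y' [Ay|By] Dy' kyy'].
  by left; apply: satA kyy'.
by right; apply: satB kyy'.
Qed.

Lemma saturatedD A B : saturated A -> saturated B -> saturated (A `\` B).
Proof.
move=> [AD satA] [BD satB]; split=> [y [/AD] //|y y' [Ay nBy] Dy' kyy'].
by split=> [|By']; [apply: satA kyy' | apply/nBy/(satB _ _ By' (AD _ Ay))].
Qed.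

Lemma pullback0 : pullback set0 = set0.
Proof. by apply/seteqP; split=> x // [_ [y]]. Qed.

Lemma pullbackU A B : pullback (A `|` B) = pullback A `|` pullback B.
Proof. by rewrite /pullback image_setU preimage_setU setIUr. Qed.

Lemma pullbackD A B : saturated A -> saturated B ->
  pullback (A `\` B) = pullback A `\` pullback B.
Proof.
move=> [AD _] [_ satB]; apply/seteqP; split=> [x [Dx [y [Ay nBy] kyx]]|].
  split=> [|[_ [b Bb kbx]]]; first by split=> //; exists y.
  by apply/nBy/(satB _ _ Bb (AD _ Ay)); rewrite kyx.
move=> x [[Dx [y Ay kyx]] nBx]; split=> //; exists y => //; split=> // By.
by apply: nBx; split=> //; exists y.
Qed.

Lemma pullbackI A B : saturated A -> saturated B ->
  pullback (A `&` B) = pullback A `&` pullback B.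
Proof.
move=> satA satB; rewrite -[in LHS](setDD A B) pullbackD //; last first.
  exact: saturatedD.
by rewrite pullbackD // setDD.
Qed.

Lemma bullet_pullback (G' : set (set T')) (G : set (set T)) :
  (forall Y, G' Y -> saturated Y /\ bullet G (pullback Y)) ->
  forall Y, bullet G' Y -> saturated Y /\ bullet G (pullback Y).
Proof.
move=> G'G Y; elim=> {Y} [|Y /G'G //|A B _ [satA bA] _ [satB bB] AB|
                          A B _ [satA bA] _ [satB bB] BA].
- by rewrite pullback0; split; [apply: saturated0 | apply: bullet0].
- split; first exact: saturatedU.
  rewrite pullbackU; apply: bulletU => //.
  by rewrite -pullbackI // AB pullback0.
- split; first exact: saturatedD.
  rewrite pullbackD //; apply: bulletD => // x [Dx [y By kyx]].
  by split=> //; exists y => //; apply: BA.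
Qed.

End Pullback.

Section IntersectionLattice.
Variable T : Type.
Implicit Types (F Tc : set (set T)) (U : set T) (x y : T).

Lemma Sfam_set0 F Tc : Tc = set0 -> Sfam F Tc = hat1 F.
Proof. by rewrite /Sfam; case: pselect. Qed.

Lemma Sfam_bigcap F Tc : Tc <> set0 -> Sfam F Tc = \bigcap_(X in Tc) X.
Proof. by rewrite /Sfam; case: pselect. Qed.

Lemma ilat_hat1 F : ilat F (hat1 F).
Proof. by exists set0 => //; rewrite Sfam_set0. Qed.

Lemma ilat_sub_hat1 F U : ilat F U -> U `<=` hat1 F.
Proof.
case=> Tc TcF ->; have [->|Tc0] := pselect (Tc = set0).
  by rewrite Sfam_set0.
rewrite Sfam_bigcap //; have [X TcX] : Tc !=set0 by apply/set0P/eqP.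
by move=> x /(_ X TcX) Xx; exists X => //; apply: TcF.
Qed.

Lemma ilat_minL F x : ilat F (minL F x).
Proof. by exists [set X | F X /\ X x] => // X []. Qed.

Lemma minL_bigcap F x X : F X -> X x ->
  minL F x = \bigcap_(Y in [set Y | F Y /\ Y x]) Y.
Proof.
move=> FX Xx; rewrite /minL Sfam_bigcap // => /seteqP[+ _].
by move/(_ X (conj FX Xx)).
Qed.

Lemma minL_id F x : hat1 F x -> minL F x x.
Proof. by case=> X FX Xx; rewrite (minL_bigcap FX Xx) => Y []. Qed.

Lemma minL_sub F U x : ilat F U -> U x -> minL F x `<=` U.
Proof.
case=> Tc TcF -> Ux.
have [Tc0|Tc0] := pselect (Tc = set0).
  by rewrite Sfam_set0 //; apply/ilat_sub_hat1/ilat_minL.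
have [X TcX] : Tc !=set0 by apply/set0P/eqP.
rewrite Sfam_bigcap // in Ux *.
rewrite (minL_bigcap (TcF X TcX) (Ux X TcX)) => y minxy Y TcY.
by apply: minxy; split; [apply: TcF | apply: Ux].
Qed.

Lemma minL_neq_hat1 F x : nontrivial F -> hat1 F x -> minL F x <> hat1 F.
Proof.
move=> [_ [_ no_top]] [X FX Xx] minx1; apply: no_top; exists X => //.
apply/seteqP; split=> [y Xy|]; first by exists X.
by rewrite -/(hat1 F) -minx1 (minL_bigcap FX Xx) => y; apply.
Qed.

Lemma ilat_saturated F U : ilat F U -> saturated (hat1 F) (minL F) U.
Proof.
move=> LU; split=> [|x y Ux Fy minyx]; first exact: ilat_sub_hat1.
by apply: (minL_sub LU Ux); rewrite -minyx; apply: minL_id.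
Qed.

End IntersectionLattice.

Lemma card_fset_set_image (X Y : choiceType) (A : set X) (g : X -> Y) :
  {in A &, injective g} -> #|` fset_set (g @` A)| = #|` fset_set A|.
Proof.
move=> ginj; have [finA|infA] := pselect (finite_set A).
  rewrite fset_set_image // card_in_imfset //= => a b Aa Ab.
  by apply: ginj; rewrite -(in_fset_set finA).
have infgA : ~ finite_set (g @` A).
  by rewrite (eq_finite_set (inj_card_eq ginj)).
(* [fset_set] sends every infinite set to [fset0]. *)
by rewrite /fset_set; case: pselect => //; case: pselect.
Qed.

Section OrderIsomorphism.
Variables (T T' : Type) (P : set (set T)) (P' : set (set T')).
Variable f : set T -> set T'.
Hypotheses (fP : forall U, P U -> P' (f U))
  (f_onto : forall V, P' V -> exists2 U, P U & f U = V)
  (f_inj : forall U V, P U -> P V -> f U = f V -> U = V)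
  (f_mono : forall U V, P U -> P V -> (U `<=` V <-> f U `<=` f V)).

Lemma iso_proper U V : P U -> P V -> (U `<` V <-> f U `<` f V).
Proof.
move=> PU PV; have monoUV := f_mono PU PV; have monoVU := f_mono PV PU.
by split=> -[UV nVU]; split=> [|VU];
  first [exact/monoUV | apply: nVU; exact/monoVU].
Qed.

Lemma iso_image : P' = f @` P.
Proof.
apply/seteqP; split=> [V /f_onto[U PU <-]|V [U PU <-]]; last exact: fP.
by exists U.
Qed.

Lemma mob_fuel_iso n U V : P U -> P V ->
  mob_fuel P n U V = mob_fuel P' n (f U) (f V).
Proof.
elim: n U => [|n IHn] U PU PV /=; case: pselect => UV; case: pselect => fUV //;
  try by [exfalso; apply: fUV; rewrite UV | exfalso; apply: UV; apply: f_inj].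
congr (GRing.opp _).
rewrite (reindex_fsbig f [set z | P z /\ U `<` z /\ z `<=` V]).
  by apply: eq_fsbigr => z; rewrite inE => -[Pz _]; apply: IHn.
split=> [z [Pz [Uz zV]]|a b|z' [Pz' [Uz' z'V]]].
- by split; [apply: fP | split; [apply/iso_proper | apply/(f_mono Pz PV)]].
- by rewrite !inE => -[Pa _] [Pb _]; apply: f_inj.
- have [z Pz fz] := f_onto Pz'; exists z => //; rewrite -fz in Uz' z'V.
  by split=> //; split; [apply/(iso_proper PU Pz) | apply/(f_mono Pz PV)].
Qed.

Lemma moebius_iso U V : P U -> P V -> moebius P U V = moebius P' (f U) (f V).
Proof.
move=> PU PV; rewrite /moebius iso_image card_fset_set_image; last first.
  by move=> a b; rewrite !inE; apply: f_inj.
by rewrite -iso_image; apply: mob_fuel_iso.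
Qed.

End OrderIsomorphism.

Section LatticeIsomorphism.
Variables (T T' : Type) (F : set (set T)) (F' : set (set T')).
Variable f : set T -> set T'.
Hypotheses (fL : forall U, ilat F U -> ilat F' (f U))
  (f_onto : forall V, ilat F' V -> exists2 U, ilat F U & f U = V)
  (f_inj : forall U V, ilat F U -> ilat F V -> f U = f V -> U = V)
  (f_mono : forall U V, ilat F U -> ilat F V -> (U `<=` V <-> f U `<=` f V)).

Lemma iso_hat1 : f (hat1 F) = hat1 F'.
Proof.
apply/seteqP; split; first exact/ilat_sub_hat1/fL/ilat_hat1.
move=> y F'y; have [U LU fU] := f_onto (ilat_hat1 F'); rewrite -fU in F'y.
exact: (f_mono LU (ilat_hat1 F)).1 (ilat_sub_hat1 LU) _ F'y.
Qed.

Lemma nci_iso V : nci F' V -> exists2 U, nci F U & f U = V.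
Proof.
move=> [L'V [V1 muV]]; have [U LU fU] := f_onto L'V; exists U => //.
split=> //; split=> [U1|]; first by apply: V1; rewrite -fU U1 iso_hat1.
by rewrite (moebius_iso fL f_onto f_inj f_mono LU (ilat_hat1 F)) fU iso_hat1.
Qed.

Hypotheses (Fnt : nontrivial F) (F'full : full F').

Lemma full_iso_minL x :
  hat1 F x -> exists2 y, hat1 F' y & minL F' y = f (minL F x).
Proof.
move=> Fx; apply: F'full; first exact/fL/ilat_minL.
rewrite -iso_hat1 => /f_inj; have := minL_neq_hat1 Fnt Fx.
by move=> minx1 /(_ (ilat_minL F x) (ilat_hat1 F)).
Qed.

Lemma pullback_iso U : ilat F U ->
  pullback (hat1 F) (f \o minL F) (minL F') (f U) = U.
Proof.
move=> LU; have monoU x := f_mono (ilat_minL F x) LU.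
apply/seteqP; split=> [x [Fx [y fUy /= minyx]]|x Ux].
  suff minxU : minL F x `<=` U by apply: minxU (minL_id Fx).
  by apply/(monoU x); rewrite -minyx; apply: minL_sub (fL LU) fUy.
have Fx := ilat_sub_hat1 LU Ux; have [y F'y minyx] := full_iso_minL Fx.
split=> //; exists y => //; apply: (monoU x).1 (minL_sub LU Ux) _ _.
by rewrite -minyx; apply: minL_id.
Qed.

End LatticeIsomorphism.

Theorem lemma4p4 (T T' : Type) (F : set (set T)) (F' : set (set T')) :
  nontrivial F -> nontrivial F' ->
  lat_iso (ilat F) (ilat F') ->
  full F' ->
  bullet (nci F') (hat1 F') ->
  bullet (nci F) (hat1 F).
Proof.
move=> Fnt _ [f [fL f_onto f_inj f_mono]] F'full bullet1'.
have pullback_f := pullback_iso fL f_onto f_inj f_mono Fnt F'full.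
have nci_pullback V : nci F' V ->
    saturated (hat1 F') (minL F') V /\
    bullet (nci F) (pullback (hat1 F) (f \o minL F) (minL F') V).
  move=> nciV; have [U nciU <-] := nci_iso fL f_onto f_inj f_mono nciV.
  have [LU _] := nciU; split; first by apply: ilat_saturated; apply: fL.
  by rewrite pullback_f //; apply: bulletG.
rewrite -(pullback_f _ (ilat_hat1 F)) (iso_hat1 fL f_onto f_mono).
by have [] := bullet_pullback nci_pullback bullet1'.
Qed.
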